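(* In any execution of the algorithm described in the context on a camera object $S$ and an associated versioned CAS object $O$, suppose an invocation of initTS makes the timestamp of some VNode $n$ valid. Then $n$ is the head of the version list of $O$ both when that initTS reads $S.\mathit{timestamp}$ and when it performs its CAS on $n.ts$.
   Context: Camera $S$ has an integer field timestamp, initially 0; takeSnapshot(): read $t:=S.\mathit{timestamp}$, perform CAS$(S.\mathit{timestamp},t,t+1)$, return $t$. A VNode has fields val and nextv (both immutable after creation) and ts (an integer or special value TBD, initially TBD). Versioned CAS object $O$ has a field $\mathit{VHead}$. Constructor with value $v$: $\mathit{VHead}:=$ new VNode(val $v$, nextv NULL); initTS($\mathit{VHead}$). initTS($n$): if $n.ts=$TBD, read $c:=S.\mathit{timestamp}$ and CAS$(n.ts,\mathrm{TBD},c)$. readSnapshot($ts$): $node:=\mathit{VHead}$; initTS($node$); while $node.ts>ts$, $node:=node.nextv$; return $node.val$. vRead(): $h:=\mathit{VHead}$; initTS($h$); return $h.val$. vCAS(oldV,newV): $h:=\mathit{VHead}$; initTS($h$); if $h.val\neq$ oldV return false; if newV $=$ oldV return true; $m:=$ new VNode(val newV, nextv $h$); if CAS$(\mathit{VHead},h,m)$ succeeds, initTS($m$) and return true; else delete $m$, call initTS on the current value of $\mathit{VHead}$, return false. The version list of $O$ is obtained by starting at the VNode pointed to by $\mathit{VHead}$ and following nextv pointers; its head is the VNode pointed to by $\mathit{VHead}$. A VNode's timestamp is valid if its ts field is not TBD, invalid otherwise; ''makes the timestamp valid'' means its CAS on $n.ts$ changes it from TBD to an integer. *)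

(* An operational (interleaving, atomic-step) model of the
   camera object S and the versioned CAS object O of the paper. *)
From Stdlib Require Import Arith.

Set Implicit Arguments.

(* A VNode: val and nextv immutable; ts = None encodes TBD. *)
Record vnode (V : Type) := VNode { val : V; nextv : option nat; ts : option nat }.

(* What a process does after an initTS invocation returns. *)
Inductive cont (V : Type) :=
| K_ctor
| K_done                        (* return from the enclosing operation    *)
| K_rs (t : nat) (node : nat)   (* readSnapshot(t): enter the while loop  *)
| K_vread (h : nat)             (* vRead: return h.val                    *)
| K_vcas (oldV newV : V) (h : nat). (* vCAS: compare h.val with oldV ...  *)

Inductive pstate (V : Type) :=
| Idle
| TS_read                                   (* takeSnapshot: read S.ts    *)
| TS_cas (t : nat)                          (* takeSnapshot: CAS(S.ts,t,t+1) *)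
| Ctor_alloc (v : V)                        (* VHead := new VNode(v,NULL) *)
| IT_check (n : nat) (k : cont V)           (* initTS(n): test n.ts = TBD *)
| IT_read (n : nat) (k : cont V)            (* initTS(n): c := S.timestamp*)
| IT_cas (n c : nat) (k : cont V)           (* initTS(n): CAS(n.ts,TBD,c) *)
| Cont (k : cont V)                         (* initTS returned; resume k  *)
| RS_read (t : nat)                         (* readSnapshot: node := VHead*)
| RS_loop (t : nat) (node : nat)            (* readSnapshot: while test   *)
| VR_read                                   (* vRead: h := VHead          *)
| VC_read (oldV newV : V)                   (* vCAS: h := VHead           *)
| VC_cas (oldV newV : V) (h : nat)          (* vCAS: CAS(VHead, h, m)     *)
| VC_fail.                                  (* vCAS: initTS(current VHead)*)

(* Global configuration.  Node identifiers are natural numbers; [heap]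
   maps identifiers to allocated VNodes; [next_id] is the next fresh id. *)
Record config (V : Type) := Config {
  cam : nat;
  vhead : option nat;             (* O.VHead (None before construction) *)
  heap : nat -> option (vnode V);
  next_id : nat;
  ctor_started : bool;
  constructed : bool;             (* constructor of O has returned *)
  pc : nat -> pstate V }.

Arguments Config {V}.

Definition fupd {A : Type} (f : nat -> A) (x : nat) (a : A) : nat -> A :=
  fun y => if Nat.eqb y x then a else f y.

Definition set_pc {V} (C : config V) (p : nat) (s : pstate V) : config V :=
  Config (cam C) (vhead C) (heap C) (next_id C) (ctor_started C) (constructed C)
         (fupd (pc C) p s).
Definition set_cam {V} (C : config V) (x : nat) : config V :=
  Config x (vhead C) (heap C) (next_id C) (ctor_started C) (constructed C) (pc C).
Definition set_heap {V} (C : config V) (n : nat) (nd : vnode V) : config V :=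
  Config (cam C) (vhead C) (fupd (heap C) n (Some nd)) (next_id C)
         (ctor_started C) (constructed C) (pc C).
Definition set_vhead {V} (C : config V) (h : nat) : config V :=
  Config (cam C) (Some h) (heap C) (next_id C) (ctor_started C) (constructed C) (pc C).
Definition bump_id {V} (C : config V) : config V :=
  Config (cam C) (vhead C) (heap C) (S (next_id C)) (ctor_started C) (constructed C) (pc C).
Definition set_started {V} (C : config V) : config V :=
  Config (cam C) (vhead C) (heap C) (next_id C) true (constructed C) (pc C).
Definition set_constructed {V} (C : config V) : config V :=
  Config (cam C) (vhead C) (heap C) (next_id C) (ctor_started C) true (pc C).

Definition alloc_publish {V} (C : config V) (nd : vnode V) : config V :=
  set_vhead (bump_id (set_heap C (next_id C) nd)) (next_id C).

(* Next node visited by the readSnapshot while loop, if the loop continues.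
   (The paper's invariants guarantee ts is valid and nextv non-NULL here;
   in the impossible other cases the loop simply exits.) *)
Definition rs_next {V} (t : nat) (nd : vnode V) : option nat :=
  match ts nd, nextv nd with
  | Some x, Some nx => if t <? x then Some nx else None
  | _, _ => None
  end.

Definition init_config (V : Type) : config V :=
  Config 0 None (fun _ => None) 0 false false (fun _ => Idle V).

Inductive step {V : Type} : config V -> nat -> config V -> Prop :=
| st_inv_ts C p : pc C p = Idle V -> step C p (set_pc C p (TS_read V))
| st_inv_ctor C p v : pc C p = Idle V -> ctor_started C = false ->
    step C p (set_pc (set_started C) p (Ctor_alloc v))
| st_inv_rs C p t : pc C p = Idle V -> constructed C = true ->
    step C p (set_pc C p (RS_read V t))
| st_inv_vr C p : pc C p = Idle V -> constructed C = true ->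
    step C p (set_pc C p (VR_read V))
| st_inv_vc C p o nv : pc C p = Idle V -> constructed C = true ->
    step C p (set_pc C p (VC_read o nv))
| st_ts_read C p : pc C p = TS_read V -> step C p (set_pc C p (TS_cas V (cam C)))
| st_ts_cas C p t : pc C p = TS_cas V t ->
    step C p (set_pc (set_cam C (if Nat.eqb (cam C) t then S t else cam C)) p (Idle V))
| st_ctor C p v : pc C p = Ctor_alloc v ->
    step C p (set_pc (alloc_publish C (VNode v None None)) p
                     (IT_check (next_id C) (K_ctor V)))
| st_it_check_tbd C p n k nd : pc C p = IT_check n k -> heap C n = Some nd ->
    ts nd = None -> step C p (set_pc C p (IT_read n k))
| st_it_check_valid C p n k nd x : pc C p = IT_check n k -> heap C n = Some nd ->
    ts nd = Some x -> step C p (set_pc C p (Cont k))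
| st_it_read C p n k : pc C p = IT_read n k -> step C p (set_pc C p (IT_cas n (cam C) k))
| st_it_cas_succ C p n c k nd : pc C p = IT_cas n c k -> heap C n = Some nd ->
    ts nd = None ->
    step C p (set_pc (set_heap C n (VNode (val nd) (nextv nd) (Some c))) p (Cont k))
| st_it_cas_fail C p n c k nd x : pc C p = IT_cas n c k -> heap C n = Some nd ->
    ts nd = Some x -> step C p (set_pc C p (Cont k))
| st_k_ctor C p : pc C p = Cont (K_ctor V) ->
    step C p (set_pc (set_constructed C) p (Idle V))
| st_k_done C p : pc C p = Cont (K_done V) -> step C p (set_pc C p (Idle V))
| st_k_rs C p t node : pc C p = Cont (K_rs V t node) ->
    step C p (set_pc C p (RS_loop V t node))
| st_k_vread C p h : pc C p = Cont (K_vread V h) -> step C p (set_pc C p (Idle V))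
| st_k_vcas_neq C p o nv h nd : pc C p = Cont (K_vcas o nv h) -> heap C h = Some nd ->
    val nd <> o -> step C p (set_pc C p (Idle V))
| st_k_vcas_same C p o h nd : pc C p = Cont (K_vcas o o h) -> heap C h = Some nd ->
    val nd = o -> step C p (set_pc C p (Idle V))
| st_k_vcas_go C p o nv h nd : pc C p = Cont (K_vcas o nv h) -> heap C h = Some nd ->
    val nd = o -> nv <> o -> step C p (set_pc C p (VC_cas o nv h))
| st_rs_read C p t n : pc C p = RS_read V t -> vhead C = Some n ->
    step C p (set_pc C p (IT_check n (K_rs V t n)))
| st_rs_loop_next C p t node nd nx : pc C p = RS_loop V t node -> heap C node = Some nd ->
    rs_next t nd = Some nx -> step C p (set_pc C p (RS_loop V t nx))
| st_rs_loop_ret C p t node nd : pc C p = RS_loop V t node -> heap C node = Some nd ->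
    rs_next t nd = None -> step C p (set_pc C p (Idle V))
| st_vr_read C p h : pc C p = VR_read V -> vhead C = Some h ->
    step C p (set_pc C p (IT_check h (K_vread V h)))
| st_vc_read C p o nv h : pc C p = VC_read o nv -> vhead C = Some h ->
    step C p (set_pc C p (IT_check h (K_vcas o nv h)))
| st_vc_cas_succ C p o nv h : pc C p = VC_cas o nv h -> vhead C = Some h ->
    step C p (set_pc (alloc_publish C (VNode nv (Some h) None)) p
                     (IT_check (next_id C) (K_done V)))
| st_vc_cas_fail C p o nv h : pc C p = VC_cas o nv h -> vhead C <> Some h ->
    step C p (set_pc C p (VC_fail V))
| st_vc_fail C p h : pc C p = VC_fail V -> vhead C = Some h ->
    step C p (set_pc C p (IT_check h (K_done V))).

(* A finite execution of length N: configurations cfg 0 .. cfg N, where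
   step k (k < N) is taken by process [who k]. *)
Definition is_execution {V : Type} (N : nat) (cfg : nat -> config V) (who : nat -> nat)
  : Prop :=
  cfg 0 = init_config V /\ forall k, k < N -> step (cfg k) (who k) (cfg (S k)).

Definition ts_invalid {V} (C : config V) (n : nat) : Prop :=
  exists nd, heap C n = Some nd /\ ts nd = None.
Definition ts_valid {V} (C : config V) (n : nat) : Prop :=
  exists nd x, heap C n = Some nd /\ ts nd = Some x.

From Stdlib Require Import Arith Lia.

(* At every moment, a node whose timestamp is still TBD is the head of the
   version list.  The constructor publishes its node while the list is empty,
   and vCAS publishes a new node only by a CAS on VHead from the node h it
   passed to initTS, whose timestamp is therefore already valid: publishing
   never leaves a TBD node behind the head.  Timestamps never revert to TBD,
   so the node n, still TBD when initTS performs its CAS, was TBD when it read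
   S.timestamp as well, and is the head at both moments. *)

Set Implicit Arguments.

Lemma fupd_eq {A} (f : nat -> A) x a : fupd f x a x = a.
Proof. unfold fupd; now rewrite Nat.eqb_refl. Qed.

Lemma fupd_neq {A} (f : nat -> A) x a y : y <> x -> fupd f x a y = f y.
Proof. intros; unfold fupd; now destruct (Nat.eqb_spec y x). Qed.

Lemma fupd_cases {A} (f : nat -> A) x a y :
  (y = x /\ fupd f x a y = a) \/ (y <> x /\ fupd f x a y = f y).
Proof. destruct (Nat.eq_dec y x); [left; subst; rewrite fupd_eq | right; rewrite fupd_neq]; auto. Qed.

Lemma fupd_forall {A} (P : A -> Prop) f x a :
  P a -> (forall y, P (f y)) -> forall y, P (fupd f x a y).
Proof. intros Ha Hf y; unfold fupd; now destruct (Nat.eqb y x). Qed.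

Section VersionedCAS.
Context {V : Type}.

Implicit Types (H : nat -> option (vnode V)) (C : config V).

Definition allocated H n : Prop := H n <> None.

Definition ts_valid_in H n : Prop := exists nd x, H n = Some nd /\ ts nd = Some x.

Lemma ts_invalid_not_valid C n : ts_invalid C n -> ~ ts_valid C n.
Proof. intros [nd [E T]] [nd' [x [E' T']]]; congruence. Qed.

Definition heap_extends H H' : Prop :=
  (forall n, allocated H n -> allocated H' n) /\
  (forall n, ts_valid_in H n -> ts_valid_in H' n).

Lemma heap_extends_refl H : heap_extends H H.
Proof. split; auto. Qed.

Lemma heap_extends_update H m nd :
  ~ ts_valid_in H m -> heap_extends H (fupd H m (Some nd)).
Proof.
  unfold heap_extends, allocated, ts_valid_in in *.
  intros Hm; split; intros n Hn; destruct (fupd_cases H m (Some nd) n) as [[Hnm ->] | [_ ->]];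
    auto; [discriminate | subst; contradiction].
Qed.

(* vCAS runs initTS on the very node h it later tries to replace, so h is
   valid by the time of its CAS on VHead. *)
Definition initTS_cont_wf (n : nat) (k : cont V) : Prop :=
  match k with K_vcas _ _ h => h = n | _ => True end.

Definition cont_wf H (k : cont V) : Prop :=
  match k with K_vcas _ _ h => ts_valid_in H h | _ => True end.

Definition pstate_wf H (s : pstate V) : Prop :=
  match s with
  | IT_check n k | IT_read n k | IT_cas n _ k => allocated H n /\ initTS_cont_wf n k
  | Cont k => cont_wf H k
  | VC_cas _ _ h => ts_valid_in H h
  | _ => True
  end.

Lemma cont_wf_initTS H n k : initTS_cont_wf n k -> ts_valid_in H n -> cont_wf H k.
Proof. destruct k; cbn; intros; subst; auto. Qed.

Lemma pstate_wf_extends H H' s : heap_extends H H' -> pstate_wf H s -> pstate_wf H' s.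
Proof.
  intros [Halloc Hvalid]; destruct s; cbn; try destruct k; cbn; intuition.
Qed.

Definition ctor_allocating C q : Prop := exists v, pc C q = Ctor_alloc v.

Record invariant C : Prop := {
  tbd_is_head : forall n, ts_invalid C n -> vhead C = Some n;
  fresh_unallocated : forall n, next_id C <= n -> heap C n = None;
  head_allocated : forall n, vhead C = Some n -> allocated (heap C) n;
  unstarted_headless : ctor_started C = false -> vhead C = None;
  pc_wf : forall q, pstate_wf (heap C) (pc C q);
  ctor_allocating_sole : forall q, ctor_allocating C q ->
    ctor_started C = true /\ vhead C = None /\ forall r, ctor_allocating C r -> r = q }.

Lemma fresh_not_stamped C : invariant C -> ~ ts_valid C (next_id C).
Proof.
  intros HI (? & ? & E & _); rewrite (fresh_unallocated HI (le_n _)) in E; discriminate.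
Qed.

Lemma inv_init : invariant (init_config V).
Proof.
  constructor; cbn; try discriminate; auto.
  - intros n [nd [E _]]; discriminate.
  - intros q [v E]; discriminate.
Qed.

Lemma ctor_allocating_set_pc C p s q :
  ctor_allocating (set_pc C p s) q ->
  (q = p /\ exists v, s = Ctor_alloc v) \/ (q <> p /\ ctor_allocating C q).
Proof.
  intros [v E]; cbn in E.
  destruct (fupd_cases (pc C) p s q) as [[-> E'] | [Hq E']]; rewrite E' in E.
  - left; split; [reflexivity | exists v; exact E].
  - right; split; [exact Hq | exists v; exact E].
Qed.

Lemma inv_set_pc C p s :
  invariant C -> pstate_wf (heap C) s -> (forall v, s <> Ctor_alloc v) ->
  invariant (set_pc C p s).
Proof.
  intros HI Hs Hnc.
  assert (Hold : forall q, ctor_allocating (set_pc C p s) q -> ctor_allocating C q)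
    by (intros q Hq; apply ctor_allocating_set_pc in Hq as [[_ [v E]] | [_ Hq]];
        [destruct (Hnc v E) | exact Hq]).
  constructor; cbn; try apply HI.
  - apply fupd_forall; [exact Hs | apply HI].
  - intros q Hq; destruct (ctor_allocating_sole HI (Hold q Hq)) as (? & ? & Hsole).
    auto.
Qed.

Lemma inv_set_cam C x : invariant C -> invariant (set_cam C x).
Proof. intros HI; constructor; apply HI. Qed.

Lemma inv_set_constructed C : invariant C -> invariant (set_constructed C).
Proof. intros HI; constructor; apply HI. Qed.

Lemma inv_start_ctor C p v :
  invariant C -> ctor_started C = false -> invariant (set_pc (set_started C) p (Ctor_alloc v)).
Proof.
  intros HI Hns.
  assert (Hp : forall q, ctor_allocating (set_pc (set_started C) p (Ctor_alloc v)) q -> q = p).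
  { intros q Hq; apply ctor_allocating_set_pc in Hq as [[-> _] | [_ Hq]]; auto.
    destruct (ctor_allocating_sole HI Hq) as [Hs _]; congruence. }
  constructor; cbn; try apply HI; try discriminate.
  - apply fupd_forall; [exact I | apply HI].
  - intros q Hq; rewrite (Hp q Hq).
    repeat split; auto. apply (unstarted_headless HI Hns).
Qed.

Lemma inv_set_heap_stamp C n nd x :
  invariant C -> ts_invalid C n -> ts nd = Some x -> invariant (set_heap C n nd).
Proof.
  intros HI Hn Hnd. pose proof Hn as [old [Hold _]].
  assert (Hext : heap_extends (heap C) (heap (set_heap C n nd))).
  { apply heap_extends_update; apply ts_invalid_not_valid; exact Hn. }
  constructor; cbn; try apply HI.
  - intros m [nd' [E T]]; cbn in E.
    destruct (fupd_cases (heap C) n (Some nd) m) as [[-> E'] | [_ E']]; rewrite E' in E.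
    + congruence.
    + apply HI; exists nd'; auto.
  - intros m Hm; rewrite fupd_neq; [apply HI; exact Hm |].
    intros ->; rewrite (fresh_unallocated HI Hm) in Hold; discriminate.
  - intros m Hm; apply Hext, HI, Hm.
  - intro q; eapply pstate_wf_extends; [exact Hext | apply HI].
Qed.

Lemma no_tbd_of_head_stamped C :
  invariant C -> (forall h, vhead C = Some h -> ts_valid C h) -> forall m, ~ ts_invalid C m.
Proof.
  intros HI Hh m Hm. apply (ts_invalid_not_valid Hm), Hh, HI, Hm.
Qed.

Lemma inv_publish C p nd k :
  invariant C -> ctor_started C = true ->
  (forall m, ~ ts_invalid C m) ->
  (forall q, ctor_allocating C q -> q = p) ->
  initTS_cont_wf (next_id C) k ->
  invariant (set_pc (alloc_publish C nd) p (IT_check (next_id C) k)).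
Proof.
  intros HI Hst Hntbd Hsole Hk.
  assert (Hext : heap_extends (heap C) (fupd (heap C) (next_id C) (Some nd)))
    by (apply heap_extends_update, fresh_not_stamped, HI).
  constructor; cbn.
  - intros m [nd' [E T]]; cbn in E.
    destruct (fupd_cases (heap C) (next_id C) (Some nd) m) as [[-> _] | [_ E']]; auto.
    rewrite E' in E; destruct (Hntbd m); exists nd'; auto.
  - intros m Hm; rewrite fupd_neq by lia; apply HI; lia.
  - intros m [= <-]; unfold allocated; rewrite fupd_eq; discriminate.
  - congruence.
  - apply fupd_forall.
    + split; [unfold allocated; rewrite fupd_eq; discriminate | exact Hk].
    + intro q; eapply pstate_wf_extends; [exact Hext | apply HI].
  - intros q Hq; apply ctor_allocating_set_pc in Hq as [[_ [v E]] | [Hqp Hq]];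
      [discriminate | destruct (Hqp (Hsole q Hq))].
Qed.

Lemma inv_ctor_step C p v :
  invariant C -> pc C p = Ctor_alloc v ->
  invariant (set_pc (alloc_publish C (VNode v None None)) p (IT_check (next_id C) (K_ctor V))).
Proof.
  intros HI Hp.
  destruct (ctor_allocating_sole HI (ex_intro _ v Hp)) as (Hst & Hnil & Hsole).
  apply inv_publish; auto.
  - apply no_tbd_of_head_stamped; [exact HI | congruence].
  - exact I.
Qed.

Lemma inv_vcas_publish_step C p o nv h :
  invariant C -> pc C p = VC_cas o nv h -> vhead C = Some h ->
  invariant (set_pc (alloc_publish C (VNode nv (Some h) None)) p (IT_check (next_id C) (K_done V))).
Proof.
  intros HI Hp Hh.
  pose proof (pc_wf HI p) as Hwf; rewrite Hp in Hwf.
  apply inv_publish; auto.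
  - destruct (ctor_started C) eqn:E; auto.
    rewrite (unstarted_headless HI E) in Hh; discriminate.
  - apply no_tbd_of_head_stamped; [exact HI |].
    intros h' Hh'; rewrite Hh in Hh'; injection Hh' as <-; exact Hwf.
  - intros q Hq; destruct (ctor_allocating_sole HI Hq) as (_ & Hnil & _); congruence.
  - exact I.
Qed.

Lemma inv_stamp_step C p n c k nd :
  invariant C -> pc C p = IT_cas n c k -> heap C n = Some nd -> ts nd = None ->
  invariant (set_pc (set_heap C n (VNode (val nd) (nextv nd) (Some c))) p (Cont k)).
Proof.
  intros HI Hp Hn Htbd.
  pose proof (pc_wf HI p) as Hwf; rewrite Hp in Hwf.
  apply inv_set_pc; [| | discriminate].
  - eapply inv_set_heap_stamp; [exact HI | exists nd; auto | reflexivity].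
  - eapply cont_wf_initTS; [apply Hwf |].
    exists (VNode (val nd) (nextv nd) (Some c)), c; cbn; rewrite fupd_eq; auto.
Qed.

Lemma inv_step C p C' : invariant C -> step C p C' -> invariant C'.
Proof.
  intros HI Hstep. pose proof (pc_wf HI p) as Hwf.
  destruct Hstep;
    match goal with Hpc : pc _ _ = _ |- _ => rewrite Hpc in Hwf end; cbn in Hwf.
  all: first
    [ eapply inv_start_ctor; eassumption
    | eapply inv_ctor_step; eassumption
    | eapply inv_stamp_step; eassumption
    | eapply inv_vcas_publish_step; eassumption
      (* every other step only moves [p]'s program counter, [cam] or [constructed] *)
    | apply inv_set_pc; [ | | discriminate] ].
  all: try solve [repeat first [apply inv_set_cam | apply inv_set_constructed]; exact HI].
  all: cbn; try solve [auto].
  all: first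
    [ eapply cont_wf_initTS; [apply Hwf | do 2 eexists; split; eassumption]
    | split; [eapply head_allocated; eassumption | auto] ].
Qed.

Lemma execution_invariant N (cfg : nat -> config V) who m :
  is_execution N cfg who -> m <= N -> invariant (cfg m).
Proof.
  intros [H0 Hsteps]; induction m as [| m IH]; intros Hm.
  - rewrite H0; apply inv_init.
  - eapply inv_step; [apply IH; lia | apply Hsteps; lia].
Qed.

Lemma step_extends_heap C p C' : invariant C -> step C p C' -> heap_extends (heap C) (heap C').
Proof.
  intros HI Hstep; destruct Hstep; cbn; try apply heap_extends_refl;
    apply heap_extends_update; try apply (fresh_not_stamped HI).
  apply ts_invalid_not_valid; exists nd; auto.
Qed.

Lemma execution_ts_valid_persists N (cfg : nat -> config V) who i j n :
  is_execution N cfg who -> i <= j <= N -> ts_valid (cfg i) n -> ts_valid (cfg j) n.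
Proof.
  intros HE [Hij HjN] Hi; induction Hij as [| j Hij IH]; auto.
  assert (HIj : invariant (cfg j)) by (eapply execution_invariant; eauto; lia).
  eapply step_extends_heap; [exact HIj | apply (proj2 HE); lia | apply IH; lia].
Qed.

Lemma execution_ts_invalid_earlier N (cfg : nat -> config V) who i j n :
  is_execution N cfg who -> i <= j <= N ->
  allocated (heap (cfg i)) n -> ts_invalid (cfg j) n -> ts_invalid (cfg i) n.
Proof.
  intros HE Hij Halloc Hj.
  destruct (heap (cfg i) n) as [nd |] eqn:E; [| contradiction].
  destruct (ts nd) as [x |] eqn:T; [| exists nd; auto].
  exfalso; apply (ts_invalid_not_valid Hj).
  eapply execution_ts_valid_persists; [exact HE | exact Hij | exists nd, x; auto].
Qed.

End VersionedCAS.

Theorem lemmaA4 (V : Type) (N : nat) (cfg : nat -> config V) (who : nat -> nat)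
  (i j p n c : nat) (k k' : cont V) :
  is_execution N cfg who ->
  i < j -> j < N ->
  who i = p -> who j = p ->
  (forall l, i < l < j -> who l <> p) ->
  pc (cfg i) p = IT_read n k ->
  pc (cfg j) p = IT_cas n c k' ->
  ts_invalid (cfg j) n -> ts_valid (cfg (S j)) n ->
  vhead (cfg i) = Some n /\ vhead (cfg j) = Some n.
Proof.
  intros HE Hij HjN _ _ _ Hpi _ Hj _.
  assert (HIi : invariant (cfg i)) by (eapply execution_invariant; eauto; lia).
  assert (HIj : invariant (cfg j)) by (eapply execution_invariant; eauto; lia).
  assert (Halloc : allocated (heap (cfg i)) n)
    by (pose proof (pc_wf HIi p) as Hwf; rewrite Hpi in Hwf; apply Hwf).
  split; apply tbd_is_head; auto.
  eapply (execution_ts_invalid_earlier (j := j) HE); [lia | exact Halloc | exact Hj].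
Qed.
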